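(* Let $n>k\geq3$ be odd integers, $A$ a cyclically $k$-diagonal $n\times n$ array, $g=\gcd(n,k-1)$, $m=n/g$, $\ell=(k-1)/g$, and $I_j=[1+(j-1)g,jg]$ for $j\in[1,m]$. Suppose there exists $E\subseteq[1,n]$ with $|E|=\frac{k-1}{2}+\frac{g-1}{2}$ such that there exist an integer $i\in[1,\ell-1]$, indices $j_1<j_2<\dots<j_{i+1}$ in $[1,m]$ with $j_{s+1}-j_s\equiv-\ell\pmod m$ for $s\in[1,i]$, and $f\in[1,g-1]$, with $E=\big(I_{j_1}\cup\dots\cup I_{j_{i+1}}\big)\setminus[j_{i+1}g-f+1,j_{i+1}g]$. Then there exists a solution to $P(A)$.
   Context: Arrays are partially filled and toroidal; $F(A)$ is the set of filled cells. $s_R(i,j)=(i,j+t)$, $s_C(i,j)=(i+t,j)$ with $t\ge1$ minimal such that the cell is filled. For $R,C\in\{-1,1\}^n$, $CN_{RC}(i,j)=s_C^{c_{j'}}(i,j')$ where $(i,j')=s_R^{r_i}(i,j)$. A solution to $P(A)$ is a pair $R,C$ such that $CN_{RC}$ is a permutation of $F(A)$ forming a single cycle of length $|F(A)|$. An $n\times n$ array is cyclically $k$-diagonal if its filled cells are exactly the $(i,j)$ with $i-j\bmod n\in\{0,\dots,k-1\}$. *)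

From mathcomp Require Import all_boot all_algebra.
Set Implicit Arguments. Unset Strict Implicit. Unset Printing Implicit Defensive.

(* Arrays: n x n toroidal arrays, cells are 'I_n * 'I_n (0-based indices);
   an array is represented by its set of filled cells F(A). *)

Lemma modn_ord_lt n (x : 'I_n) m : m %% n < n.
Proof. by rewrite ltn_pmod // (leq_ltn_trans (leq0n x) (ltn_ord x)). Qed.

(* m mod n as an element of 'I_n (x only witnesses n > 0) *)
Definition ordmod n (x : 'I_n) (m : nat) : 'I_n := Ordinal (modn_ord_lt x m).

(* s_R^r (i,j) for r = 1 (forward) or r = -1 (the inverse map: backward):
   (i, j + r t) with t >= 1 minimal such that the cell is filled. *)
Definition sR n (A : {set 'I_n * 'I_n}) (r : int) (c : 'I_n * 'I_n)
  : 'I_n * 'I_n :=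
  let cell t := (c.1, ordmod c.2 (if r == 1%Z then c.2 + t else c.2 + n - t)) in
  let ts := iota 1 n in
  cell (nth 0 ts (find (fun t => cell t \in A) ts)).

(* s_C^r (i,j) = (i + r t, j) with t >= 1 minimal such that the cell is filled *)
Definition sC n (A : {set 'I_n * 'I_n}) (r : int) (c : 'I_n * 'I_n)
  : 'I_n * 'I_n :=
  let cell t := (ordmod c.1 (if r == 1%Z then c.1 + t else c.1 + n - t), c.2) in
  let ts := iota 1 n in
  cell (nth 0 ts (find (fun t => cell t \in A) ts)).

Definition CN n (A : {set 'I_n * 'I_n}) (R C : 'I_n -> int)
  (c : 'I_n * 'I_n) : 'I_n * 'I_n :=
  let c' := sR A (R c.1) c in sC A (C c'.2) c'.

(* R, C in {-1,1}^n is a solution to P(A): CN_{RC} is a permutation of F(A)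
   forming a single cycle of length |F(A)|. *)
Definition is_solution n (A : {set 'I_n * 'I_n}) (R C : 'I_n -> int) : Prop :=
  [/\ forall i, R i = 1%Z \/ R i = (-1)%Z,
      forall j, C j = 1%Z \/ C j = (-1)%Z,
      {in A, forall c, CN A R C c \in A},
      {in A &, injective (CN A R C)} &
      {in A &, forall c d, exists t, iter t (CN A R C) c = d}].

Definition cyc_diag n (k : nat) (A : {set 'I_n * 'I_n}) : Prop :=
  A = [set c : 'I_n * 'I_n | (c.1 + n - c.2) %% n < k].

From mathcomp Require Import all_boot all_algebra zify.
Set Implicit Arguments. Unset Strict Implicit. Unset Printing Implicit Defensive.

(* Encode a filled cell of the cyclically k-diagonal array by its column j and
   its diagonal D = i - j mod n < k, take R = 1 and C = -1 exactly on a set E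
   of columns.  Then CN moves one column to the right, keeping D off E and
   lowering D by 2 (mod k) on E, except that from diagonal 0 it jumps
   n - k + 1 = (m - l) g columns ahead.  CN is injective on the finite set of
   cells, so it is a single cycle as soon as one cell is reached from all.
   For E we take a translate of the given set: the blocks of g columns
   starting at t (m - l) g for t < l/2, followed by the first (g - 1)/2
   columns of the next one.  The hypothesis is only needed for (l/2)(m - l) < m,
   which keeps these blocks disjoint and in increasing order.  Since k is odd,
   starting on diagonal k - 2 in E the walk returns to diagonal k - 2 in E
   after k - 1 visits of E, and this return map on E is explicit and reaches
   a fixed column from everywhere; every cell reaches E (for diagonal 0 because
   m - l is coprime to m) and then diagonal k - 2. *)


Lemma nth_find_iota (P : pred nat) a N t0 :
  a <= t0 < a + N -> P t0 -> (forall t, a <= t < t0 -> ~~ P t) ->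
  nth 0 (iota a N) (find P (iota a N)) = t0.
Proof.
elim: N a => [|N IH] a; first by lia.
move=> t0_in Pt0 notP /=; case: ifP => Pa /=.
  case: (ltngtP a t0) => // a_t0; last by lia.
  by rewrite (negbTE (notP a _)) in Pa; lia.
have a_t0 : a != t0 by apply: contraFneq Pa => ->.
apply: IH => // [|t t_in]; first by lia.
by apply: notP; lia.
Qed.

Lemma modn_subE n a b d : 0 < n -> a = b + d %[mod n] ->
  (a %% n + n - b %% n) %% n = d %% n.
Proof.
move=> n_gt0 a_eq; have b_lt : b %% n < n by rewrite ltn_pmod.
set X := a %% n + n - b %% n.
have X_eq : X + b %% n = a %% n + n by rewrite /X; lia.
apply/eqP; rewrite -(eqn_modDr b) -modnDmr X_eq -modnDml modn_mod modnDr a_eq.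
by rewrite addnC modn_mod.
Qed.

Definition reach (T : Type) (f : T -> T) x y := exists t, iter t f x = y.

Lemma reach_refl (T : Type) (f : T -> T) x : reach f x x.
Proof. by exists 0. Qed.

Lemma reach_trans (T : Type) (f : T -> T) x y z :
  reach f x y -> reach f y z -> reach f x z.
Proof. by case=> a <- [b <-]; exists (b + a); rewrite iterD. Qed.

Lemma reach_all_of_sink (T : finType) (S : {pred T}) (f : T -> T) x0 :
  {homo f : x / x \in S} -> {in S &, injective f} -> x0 \in S ->
  {in S, forall x, reach f x x0} -> {in S &, forall x y, reach f x y}.
Proof.
move=> fS injf x0S to_x0 x y xS yS.
have fcon z : z \in S -> fconnect f z x0 by move/to_x0 => [t <-]; exact: fconnect_iter.
have : fconnect f x y.
  by apply: connect_trans (fcon x xS) _; rewrite (fconnect_sym_in fS injf) ?fcon.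
by move/iter_findex; exists (findex f x y).
Qed.

Section CyclicDiagonal.
Variables (n k : nat) (A : {set 'I_n * 'I_n}).
Hypotheses (A_diag : cyc_diag k A) (k_ge2 : 2 <= k) (k_lt_n : k < n).

Definition ordn (v : nat) : 'I_n :=
  Ordinal (ltn_pmod v (leq_ltn_trans (leq0n k) k_lt_n)).

Definition cell (x : nat * nat) := (ordn (x.1 + x.2), ordn x.1).

Lemma mem_cyc_diag (x y : 'I_n) a b d : val x = a %% n -> val y = b %% n ->
  a = b + d %[mod n] -> ((x, y) \in A) = (d %% n < k).
Proof.
move=> xa yb ad; rewrite A_diag inE /= xa yb (modn_subE _ ad) //; lia.
Qed.

Lemma sR_fwdE (c : 'I_n * 'I_n) t0 : 0 < t0 <= n ->
  (c.1, ordmod c.2 (c.2 + t0)) \in A ->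
  (forall t, 0 < t < t0 -> (c.1, ordmod c.2 (c.2 + t)) \notin A) ->
  sR A 1%Z c = (c.1, ordmod c.2 (c.2 + t0)).
Proof. by move=> t0_in At0 notA; rewrite /sR (@nth_find_iota _ 1 n t0) //; lia. Qed.

Lemma sC_fwdE (c : 'I_n * 'I_n) t0 : 0 < t0 <= n ->
  (ordmod c.1 (c.1 + t0), c.2) \in A ->
  (forall t, 0 < t < t0 -> (ordmod c.1 (c.1 + t), c.2) \notin A) ->
  sC A 1%Z c = (ordmod c.1 (c.1 + t0), c.2).
Proof. by move=> t0_in At0 notA; rewrite /sC (@nth_find_iota _ 1 n t0) //; lia. Qed.

Lemma sC_bwdE (c : 'I_n * 'I_n) t0 : 0 < t0 <= n ->
  (ordmod c.1 (c.1 + n - t0), c.2) \in A ->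
  (forall t, 0 < t < t0 -> (ordmod c.1 (c.1 + n - t), c.2) \notin A) ->
  sC A (-1)%Z c = (ordmod c.1 (c.1 + n - t0), c.2).
Proof. by move=> t0_in At0 notA; rewrite /sC (@nth_find_iota _ 1 n t0) //; lia. Qed.

Lemma sR_cell j D : D < k ->
  sR A 1%Z (cell (j, D)) =
  cell (j + (if D != 0 then 1 else n - k.-1), if D != 0 then D.-1 else k.-1).
Proof.
move=> D_lt; set c := cell (j, D).
have memR t : t <= n ->
    ((c.1, ordmod c.2 (c.2 + t)) \in A) = ((D + n - t) %% n < k).
  move=> t_le; rewrite (@mem_cyc_diag _ _ (j + D) (j %% n + t) (D + n - t)) //.
  by rewrite (_ : _ + t + _ = j %% n + D + n) ?modnDr ?modnDml //; lia.
case: D D_lt @c memR => [|D] D_lt c memR /=.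
  rewrite (@sR_fwdE _ (n - k.-1)) => [|||t t_in].
  - congr pair; apply: val_inj => /=; last by rewrite modnDml.
    by rewrite addn0 -addnA subnK ?modnDr //; lia.
  - by lia.
  - by rewrite memR ?modn_small; lia.
  - by rewrite memR ?modn_small; lia.
rewrite (@sR_fwdE _ 1) => [|||t].
- by congr pair; apply: val_inj => /=; rewrite ?modnDml // -addnA add1n.
- by lia.
- by rewrite memR ?addSn ?subn1 /= ?modnDr ?modn_small; lia.
- by lia.
Qed.

Lemma sC_fwd_cell j D : D < k ->
  sC A 1%Z (cell (j, D)) = cell (j, if D != k.-1 then D.+1 else 0).
Proof.
move=> D_lt; set c := cell (j, D).
have memC t : ((ordmod c.1 (c.1 + t), c.2) \in A) = ((D + t) %% n < k).
  by rewrite (@mem_cyc_diag _ _ ((j + D) %% n + t) j (D + t)) // modnDml addnA.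
case: eqP => [D_eq|D_neq] /=.
  rewrite (@sC_fwdE _ (n - k.-1)) => [|||t t_in].
  - congr pair; apply: val_inj => /=.
    by rewrite modnDml -addnA D_eq subnKC ?modnDr ?addn0 //; lia.
  - by lia.
  - by rewrite memC D_eq subnKC ?modnn; lia.
  - by rewrite memC modn_small; lia.
rewrite (@sC_fwdE _ 1) => [|||t].
- by congr pair; apply: val_inj => /=; rewrite modnDml -addnA addn1.
- by lia.
- by rewrite memC modn_small; lia.
- by lia.
Qed.

Lemma sC_bwd_cell j D : D < k ->
  sC A (-1)%Z (cell (j, D)) = cell (j, if D != 0 then D.-1 else k.-1).
Proof.
move=> D_lt; set c := cell (j, D).
have col t : t <= n -> (c.1 + n - t) %% n = (j + (D + n - t)) %% n.
  by move=> t_le /=; rewrite -addnBA // modnDml -addnBA ?addnA; lia.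
have memC t : t <= n ->
    ((ordmod c.1 (c.1 + n - t), c.2) \in A) = ((D + n - t) %% n < k).
  by move=> t_le; rewrite (@mem_cyc_diag _ _ (c.1 + n - t) j (D + n - t)) // col.
case: D D_lt @c col memC => [|D] D_lt c col memC /=.
  rewrite (@sC_bwdE _ (n - k.-1)) => [|||t t_in].
  - by rewrite /cell; congr pair; apply: val_inj; rewrite /= col; [congr (_ %% _) | ]; lia.
  - by lia.
  - by rewrite memC ?add0n ?subKn ?modn_small; lia.
  - by rewrite memC ?add0n ?modn_small; lia.
rewrite (@sC_bwdE _ 1) => [|||t].
- rewrite /cell; congr pair; apply: val_inj.
  by rewrite /= col; [rewrite addSn subn1 /= addnA modnDr | lia].
- by lia.
- by rewrite memC ?addSn ?subn1 /= ?modnDr ?modn_small; lia.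
- by lia.
Qed.

Lemma cell_mod j D : cell (j %% n, D) = cell (j, D).
Proof. by congr pair; apply: val_inj => /=; rewrite ?modnDml ?modn_mod. Qed.

Lemma cell_in x : x.2 < k -> cell x \in A.
Proof.
by case: x => j D /= D_lt; rewrite (@mem_cyc_diag _ _ (j + D) j D) // modn_small //; lia.
Qed.

Lemma cell_onto c : c \in A -> exists2 x, x.1 < n /\ x.2 < k & c = cell x.
Proof.
case: c => a b; rewrite A_diag inE /= => ab_lt.
exists (val b, (a + n - b) %% n) => //=.
have [a_lt b_lt] := (ltn_ord a, ltn_ord b).
congr pair; apply: val_inj => /=; last by rewrite modn_small.
rewrite modnDmr (_ : b + (a + n - b) = a + n); last by lia.
by rewrite modnDr modn_small.
Qed.

Lemma cell_inj x y : x.1 < n -> x.2 < k -> y.1 < n -> y.2 < k ->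
  cell x = cell y -> x = y.
Proof.
case: x y => j D [j' D'] /= j_lt D_lt j'_lt D'_lt [] /eqP jD_eq j_eq.
have {j_eq} j_eq : j = j' by rewrite -(modn_small j_lt) -(modn_small j'_lt).
subst j'; move: jD_eq; rewrite eqn_modDl !modn_small; [by move/eqP-> | lia | lia].
Qed.

Variable Emem : pred nat.

Definition R_fwd : 'I_n -> int := fun=> 1%Z.
Definition C_of : 'I_n -> int := fun j => if Emem j then (-1)%Z else 1%Z.

Definition dec2 D := (D + k - 2) %% k.

(* [CN] in the coordinates of [cell]: the row step moves one column right and
   one diagonal down, or from diagonal [0] jumps [n - k.-1] columns to diagonal
   [k.-1]; the column step then moves one diagonal up, or down in [Emem]. *)
Definition diag_step (x : nat * nat) : nat * nat :=
  let: (j, D) := x in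
  if D != 0 then (j.+1 %% n, if Emem (j.+1 %% n) then dec2 D else D)
  else ((j + (n - k.-1)) %% n, if Emem ((j + (n - k.-1)) %% n) then k - 2 else 0).

Lemma CN_cell x : x.2 < k -> CN A R_fwd C_of (cell x) = cell (diag_step x).
Proof.
case: x => j D /= D_lt; rewrite /CN /R_fwd sR_cell //= /C_of.
case: D D_lt => [|D] D_lt /=; rewrite ?addn1; case: ifP => Ej.
- rewrite sC_bwd_cell /=; last by lia.
  have -> : (k.-1 != 0) = true by apply/eqP; lia.
  by rewrite cell_mod; congr cell; congr pair; lia.
- by rewrite sC_fwd_cell /=; [rewrite eqxx cell_mod | lia].
- rewrite sC_bwd_cell /=; last by lia.
  rewrite cell_mod /dec2; case: D D_lt => [|D] D_lt /=.
    by congr cell; congr pair; rewrite modn_small; lia.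
  have -> : D.+2 + k - 2 = D + k by lia.
  by rewrite modnDr modn_small //; lia.
- rewrite sC_fwd_cell /=; last by lia.
  have -> : (D != k.-1) = true by apply/eqP; lia.
  by rewrite cell_mod.
Qed.

Lemma diag_step_bound x : x.2 < k -> (diag_step x).1 < n /\ (diag_step x).2 < k.
Proof.
case: x => j D /= D_lt; have n_gt0 : 0 < n by lia.
case: ifP => _; split; rewrite /= ?ltn_pmod //; case: ifP => _ //=; try lia.
by rewrite /dec2 ltn_pmod; lia.
Qed.

Definition diag_unstep (y : nat * nat) : nat * nat :=
  let: (j, D') := y in
  let D := if Emem j then (D' + 2) %% k else D' in
  if D != 0 then ((j + n - 1) %% n, D) else ((j + k.-1) %% n, 0).

Lemma diag_stepK x : x.1 < n -> x.2 < k -> diag_unstep (diag_step x) = x.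
Proof.
case: x => j D /= j_lt D_lt; have n_gt0 : 0 < n by lia.
have pred_col : (j.+1 %% n + n - 1) %% n = j.
  have -> : j.+1 %% n + n - 1 = j.+1 %% n + n.-1 by lia.
  by rewrite modnDml -addn1 -addnA add1n prednK // modnDr modn_small.
have back_jump : ((j + (n - k.-1)) %% n + k.-1) %% n = j.
  by rewrite modnDml -addnA subnK ?modnDr ?modn_small //; lia.
case: D D_lt => [|D] D_lt /=.
  case: (Emem _) => /=; last by rewrite back_jump.
  by rewrite subnK ?modnn //= back_jump.
case: (Emem _) => /=; last by rewrite pred_col.
rewrite /dec2 modnDml (_ : D.+1 + k - 2 + 2 = D.+1 + k); last by lia.
by rewrite modnDr modn_small //= pred_col.
Qed.

Lemma iter_CN_cell t x : x.2 < k ->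
  iter t (CN A R_fwd C_of) (cell x) = cell (iter t diag_step x).
Proof.
move=> D_lt; elim: t => //= t ->.
have : (iter t diag_step x).2 < k.
  by elim: t => //= t IHt; case: (diag_step_bound IHt).
by case: (iter t diag_step x) => a b /= b_lt; rewrite CN_cell.
Qed.

Lemma CN_in : {homo CN A R_fwd C_of : c / c \in A}.
Proof.
move=> _ /cell_onto [x [_ D_lt] ->].
by rewrite CN_cell //; apply: cell_in; case: (diag_step_bound D_lt).
Qed.

Lemma CN_inj : {in A &, injective (CN A R_fwd C_of)}.
Proof.
move=> _ _ /cell_onto [x [j_lt D_lt] ->] /cell_onto [y [j'_lt D'_lt] ->].
rewrite !CN_cell // => /cell_inj eq_step.
have [[s1 s2] [s1' s2']] := (diag_step_bound D_lt, diag_step_bound D'_lt).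
by rewrite -(diag_stepK j_lt D_lt) -(diag_stepK j'_lt D'_lt) eq_step.
Qed.

Lemma is_solution_of_sink x0 : x0.1 < n -> x0.2 < k ->
  (forall x, x.1 < n -> x.2 < k -> reach diag_step x x0) ->
  is_solution A R_fwd C_of.
Proof.
move=> x0_1 x0_2 to_x0; split.
- by left.
- by move=> j; rewrite /C_of; case: (Emem j); [right | left].
- exact: CN_in.
- exact: CN_inj.
apply: (reach_all_of_sink CN_in CN_inj (cell_in x0_2)).
move=> _ /cell_onto [x [j_lt D_lt] ->]; have [t <-] := to_x0 x j_lt D_lt.
by exists t; rewrite iter_CN_cell.
Qed.
End CyclicDiagonal.

Lemma iter_dec2 k N D : 2 <= k -> D < k ->
  iter N (dec2 k) D = (D + N * (k - 2)) %% k.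
Proof.
move=> k_ge2 D_lt; elim: N => [|N IH] /=; first by rewrite addn0 modn_small.
rewrite IH /dec2 (_ : _ %% k + k - 2 = (D + N * (k - 2)) %% k + (k - 2)); last by lia.
by rewrite modnDml mulSn (addnC (k - 2)) addnA.
Qed.

Lemma iter_dec2_neq0 k N : odd k -> 2 <= k -> N < k.-1 ->
  iter N (dec2 k) (k - 2) != 0.
Proof.
move=> k_odd k_ge2 N_lt; rewrite iter_dec2 //; last by lia.
rewrite -mulSn; apply: contraTneq N_lt => /eqP; rewrite -leqNgt -/(k %| _) => k_dvd.
have : k %| N.+1 * (k - 2) + N.+1 * 2 by rewrite -mulnDr subnK // dvdn_mull.
rewrite dvdn_addr // Gauss_dvdl ?coprimen2 // => /dvdn_leq; lia.
Qed.

Lemma iter_dec2_last k : 2 <= k -> iter k.-1 (dec2 k) (k - 2) = 0.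
Proof.
move=> k_ge2; rewrite iter_dec2 //; last by lia.
by rewrite -mulSn prednK; [exact: modnMr | lia].
Qed.

(* [k./2.+1] is the inverse of [2] modulo [k]. *)
Lemma iter_dec2_eq0 k D : odd k -> 2 <= k -> D < k ->
  exists N, iter N (dec2 k) D = 0.
Proof.
move=> k_odd k_ge2 D_lt; set a := k./2.
have k_eq : k = 2 * a + 1.
  by rewrite -[in LHS](odd_double_half k) k_odd -mul2n addnC.
exists (D * a.+1); rewrite iter_dec2 //.
by rewrite (_ : D + D * a.+1 * (k - 2) = D * a * k) ?modnMl //; rewrite k_eq; nia.
Qed.

Lemma coprime_mulr_modn_inj m w x y : coprime m w -> x < m -> y < m ->
  x * w = y * w %[mod m] -> x = y.
Proof.
move=> co_mw; wlog xy : x y / x <= y => [wlog_xy|x_lt y_lt].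
  by case: (leqP x y) => [|/ltnW] le x_lt y_lt eq_mod; [|symmetry]; apply: wlog_xy.
move/esym/eqP; rewrite eqn_mod_dvd ?leq_mul2r ?xy ?orbT // -mulnBl Gauss_dvdl //.
by case: (posnP (y - x)) => [|pos /(dvdn_leq pos)]; lia.
Qed.

Lemma coprime_mod_solve m w b : 0 < m -> coprime m w ->
  exists2 r, 0 < r & m %| b + r * w.
Proof.
move=> m_gt0 co_mw; have [a _] := Bezoutl w m_gt0; rewrite (eqP co_mw) => m_dvd.
exists (b * a + m); first by lia.
rewrite (_ : b + _ = b * (1 + a * w) + w * m); first by rewrite dvdn_add ?dvdn_mull.
by rewrite mulnDr muln1 mulnDl mulnA (mulnC m); lia.
Qed.

Section BlockSolution.
Variables (n k g m i0 h : nat).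
Hypotheses (g_eq : g = h.*2.+1) (h_gt0 : 0 < h) (i0_gt0 : 0 < i0)
  (n_eq : n = g * m) (k_eq : k = (g * (2 * i0)).+1) (l_lt_m : 2 * i0 < m)
  (blocks_fit : i0 * (m - 2 * i0) < m) (m_coprime : coprime m (m - 2 * i0)).

(* The set E, 0-based and translated so that its first block starts at column
   [0]: the blocks [[t * Egap * g, t * Egap * g + g)] for [t < i0], then the
   first [h] columns of block [i0 * Egap].  [Ecol p] is its [p]-th column. *)
Definition Egap := m - 2 * i0.
Definition Esize := i0 * g + h.
Definition Emem y :=
  has (fun t => (y %/ g == t * Egap) && ((t < i0) || (y %% g < h))) (iota 0 i0.+1).
Definition Ecol p := p %/ g * Egap * g + p %% g.

Let g_gt0 : 0 < g. Proof. by rewrite g_eq. Qed.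
Let Egap_gt0 : 0 < Egap. Proof. by rewrite /Egap; lia. Qed.
Let n_gt0 : 0 < n. Proof. by rewrite n_eq muln_gt0 g_gt0; lia. Qed.
Let k_ge2 : 2 <= k. Proof. by rewrite k_eq; nia. Qed.
Let k_lt_n : k < n.
Proof.
have : g * (2 * i0).+1 <= g * m by rewrite leq_mul2l l_lt_m orbT.
by rewrite n_eq k_eq mulnS; lia.
Qed.
Let k_pred : k.-1 = 2 * (i0 * g). Proof. by rewrite k_eq /=; lia. Qed.
Let jump_len : n - k.-1 = Egap * g.
Proof. by rewrite n_eq k_pred /Egap mulnBl (mulnC m) mulnA. Qed.
Let g_le_Esize : g <= Esize. Proof. by rewrite /Esize; nia. Qed.

Lemma Ecol_small q : q < g -> Ecol q = q.
Proof. by move=> q_lt; rewrite /Ecol divn_small // modn_small. Qed.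

Lemma Ecol_ltn : {homo Ecol : p q / p < q}.
Proof.
move=> p q pq; rewrite /Ecol.
have [p_r q_r] := (ltn_pmod p g_gt0, ltn_pmod q g_gt0).
case: (ltnP (p %/ g) (q %/ g)) => [div_lt|div_ge].
  have : (p %/ g * Egap).+1 * g <= q %/ g * Egap * g.
    rewrite leq_mul2r; apply/orP; right.
    apply: (@leq_trans ((p %/ g).+1 * Egap)); first by rewrite mulSn; lia.
    by rewrite leq_mul2r div_lt orbT.
  by rewrite mulSn; lia.
have div_eq : p %/ g = q %/ g by apply/eqP; rewrite eqn_leq div_ge leq_div2r // ltnW.
by move: pq; rewrite {1}(divn_eq p g) {1}(divn_eq q g) div_eq; lia.
Qed.

Lemma Ecol_ltn_mono : {mono Ecol : p q / p < q}.
Proof. exact/leqW_mono/leq_mono/Ecol_ltn. Qed.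

Lemma Esize_div p : p < Esize -> p %/ g <= i0.
Proof. by move=> p_lt; rewrite -ltnS ltn_divLR //; rewrite /Esize in p_lt; lia. Qed.

Lemma Ecol_lt_n p : p < Esize -> Ecol p < n.
Proof.
move=> p_lt; have p_r := ltn_pmod p g_gt0.
have : (p %/ g * Egap).+1 <= m.
  by apply: leq_ltn_trans blocks_fit; rewrite leq_mul2r Esize_div ?orbT.
by rewrite n_eq mulnC -(leq_pmul2r g_gt0) mulSn /Ecol; lia.
Qed.

Lemma Emem_Ecol p : p < Esize -> Emem (Ecol p).
Proof.
move=> p_lt; apply/hasP; exists (p %/ g); first by rewrite mem_iota ltnS Esize_div.
rewrite /Ecol divnMDl // (divn_small (ltn_pmod _ g_gt0)) addn0 eqxx.
rewrite modnMDl modn_mod /=; apply: contraTT p_lt; rewrite negb_or -leqNgt.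
by case/andP => div_ge r_ge; rewrite -leqNgt /Esize (divn_eq p g); nia.
Qed.

Lemma Emem_small q : q < g -> Emem q.
Proof. by move=> q_lt; rewrite -(Ecol_small q_lt) Emem_Ecol //; lia. Qed.

Lemma EmemP y : Emem y -> exists2 p, p < Esize & Ecol p = y.
Proof.
case/hasP => t; rewrite mem_iota ltnS => /andP [_ t_le] /andP [/eqP y_div y_r].
have y_mod := ltn_pmod y g_gt0.
exists (t * g + y %% g).
  have tg : t * g <= i0 * g by rewrite leq_mul2r t_le orbT.
  case/orP: y_r => [t_lt|r_lt]; rewrite /Esize; last by lia.
  have : t.+1 * g <= i0 * g by rewrite leq_mul2r t_lt orbT.
  by rewrite mulSn; lia.
by rewrite /Ecol divnMDl // (divn_small y_mod) addn0 modnMDl modn_mod -y_div -divn_eq.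
Qed.

Lemma Emem_gap p y : Ecol p < y -> y < Ecol p.+1 -> ~~ Emem y.
Proof.
by move=> lo hi; apply/negP => /EmemP [q _ Eq]; move: lo hi; rewrite -Eq !Ecol_ltn_mono; lia.
Qed.

Lemma Emem_above p y : Esize <= p.+1 -> Ecol p < y -> ~~ Emem y.
Proof.
by move=> p_ge lo; apply/negP => /EmemP [q q_lt Eq]; move: lo; rewrite -Eq Ecol_ltn_mono; lia.
Qed.

Lemma modn_block a q : q < g -> (a * g + q) %% n = a %% m * g + q.
Proof.
move=> q_lt; rewrite n_eq {1}(divn_eq a m) mulnDl -addnA -mulnA (mulnC m) modnMDl.
rewrite modn_small //; have : (a %% m).+1 * g <= m * g.
  by rewrite leq_mul2r ltn_pmod ?orbT //; lia.
by rewrite mulSn mulnC; lia.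
Qed.

(* The column at offset [q] of block [a * Egap %% m] can only be [Ecol (a * g + q)],
   because [Egap] is invertible modulo [m]. *)
Lemma Emem_block a q : a < m -> q < g ->
  Emem (a * Egap %% m * g + q) -> a * g + q < Esize.
Proof.
move=> a_lt q_lt /EmemP [p p_lt Ecol_p].
have e_mod : p %% g = q.
  by move: (congr1 (modn^~ g) Ecol_p); rewrite /Ecol !modnMDl !modn_mod (modn_small q_lt).
have e_div : p %/ g * Egap = a * Egap %% m.
  move: (congr1 (divn^~ g) Ecol_p); rewrite /Ecol !divnMDl //.
  by rewrite (divn_small (ltn_pmod p g_gt0)) (divn_small q_lt) !addn0.
have p_div : p %/ g = a.
  apply: (coprime_mulr_modn_inj m_coprime) => //; last by rewrite e_div modn_mod.
  by have := Esize_div p_lt; lia.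
by rewrite -p_div -e_mod -divn_eq.
Qed.

Local Notation step := (diag_step n k Emem).

Lemma iter_step_walk N x D : D != 0 -> 0 < N ->
  (forall r, 0 < r < N -> ~~ Emem ((x + r) %% n)) ->
  iter N step (x, D) =
  ((x + N) %% n, if Emem ((x + N) %% n) then dec2 k D else D).
Proof.
move=> D_neq0; elim: N => [//|N IH] _ no_E.
case: (posnP N) => [->|N_gt0]; first by rewrite /= D_neq0 addn1.
rewrite iterS IH // => [|r r_in]; last by apply: no_E; lia.
have := no_E N; rewrite N_gt0 ltnSn => /(_ isT) /negbTE ->.
by rewrite /= D_neq0 -addn1 modnDml -addnA addn1.
Qed.

Lemma iter_step_jump N x : 0 < N ->
  (forall r, 0 < r < N -> ~~ Emem ((x + r * (n - k.-1)) %% n)) ->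
  iter N step (x, 0) = ((x + N * (n - k.-1)) %% n,
                        if Emem ((x + N * (n - k.-1)) %% n) then k - 2 else 0).
Proof.
elim: N => [//|N IH] _ no_E.
case: (posnP N) => [->|N_gt0]; first by rewrite /= mul1n.
rewrite iterS IH // => [|r r_in]; last by apply: no_E; lia.
have := no_E N; rewrite N_gt0 ltnSn => /(_ isT) /negbTE ->.
by rewrite /= modnDml mulSn (addnC (n - k.-1)) addnA.
Qed.

Lemma reach_walk p D : p < Esize -> D != 0 ->
  reach step (Ecol p, D) (Ecol (p.+1 %% Esize), dec2 k D).
Proof.
move=> p_lt D_neq0; have Ecol_lt := Ecol_lt_n p_lt.
case: (ltnP p.+1 Esize) => [p1_lt|p1_ge].
  have Ecol_incr := Ecol_ltn (ltnSn p); have Ecol1_lt := Ecol_lt_n p1_lt.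
  exists (Ecol p.+1 - Ecol p); rewrite iter_step_walk // ?subn_gt0 // => [|r r_in].
    by rewrite subnKC ?(ltnW Ecol_incr) // (modn_small Ecol1_lt) (modn_small p1_lt) Emem_Ecol.
  by rewrite modn_small; [apply: (Emem_gap (p := p)) | ]; lia.
have p_eq : p.+1 = Esize by apply/eqP; rewrite eqn_leq p1_ge p_lt.
exists (n - Ecol p); rewrite iter_step_walk // ?subn_gt0 // => [|r r_in].
  by rewrite subnKC ?(ltnW Ecol_lt) // p_eq !modnn Ecol_small // Emem_small.
by rewrite modn_small; [apply: (Emem_above (p := p)) | ]; lia.
Qed.

Definition Ejump p := if p + g < Esize then p + g else p %% g.

Lemma reach_jump p : p < Esize -> reach step (Ecol p, 0) (Ecol (Ejump p), k - 2).
Proof.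
move=> p_lt; rewrite /Ejump; case: ifP => [pg_lt|/negbT pg_ge].
  have Ecol_pg : Ecol (p + g) = Ecol p + (n - k.-1).
    by rewrite jump_len /Ecol divnDr // divnn g_gt0 modnDr /= !mulnDl; lia.
  exists 1; rewrite iter_step_jump // => [|r]; last by lia.
  by rewrite mul1n -Ecol_pg modn_small ?Ecol_lt_n // Emem_Ecol.
set t := p %/ g; set q := p %% g; rewrite -leqNgt in pg_ge.
have p_eq : p = t * g + q := divn_eq p g.
have t_lt : t < m by have := Esize_div p_lt; lia.
have q_lt : q < g := ltn_pmod p g_gt0.
have col r : Ecol p + r * (n - k.-1) = (t + r) * Egap * g + q.
  by rewrite jump_len /Ecol -/t -/q !mulnDl mulnA; lia.
exists (m - t); rewrite iter_step_jump ?subn_gt0 // => [|r r_in].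
  by rewrite col subnKC ?(ltnW t_lt) // modn_block // modnMr mul0n add0n Ecol_small ?Emem_small.
have tr_lt : t + r < m by lia.
rewrite col modn_block //; apply/negP => /(Emem_block tr_lt q_lt).
have : (t + 1) * g <= (t + r) * g by rewrite leq_mul2r; lia.
by rewrite mulnDl mul1n; lia.
Qed.

Let Esize_gt0 : 0 < Esize. Proof. by apply: leq_trans g_le_Esize. Qed.
Let k_odd : odd k. Proof. by rewrite k_eq /= !oddM /= andbF. Qed.

Lemma reach_walkN N p D : p < Esize -> D < k ->
  (forall N', N' < N -> iter N' (dec2 k) D != 0) ->
  reach step (Ecol p, D) (Ecol ((p + N) %% Esize), iter N (dec2 k) D).
Proof.
move=> p_lt D_lt; elim: N => [|N IH] nz; first by rewrite addn0 modn_small //; exact: reach_refl.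
apply: reach_trans (IH _) _ => [N' N'_lt|]; first by apply: nz; lia.
have := reach_walk (ltn_pmod (p + N) Esize_gt0) (nz N (ltnSn N)).
by rewrite -addn1 modnDml -addnA addn1.
Qed.

(* From diagonal [k - 2] in column [Ecol p], the walk visits the next [k - 1]
   columns of [E] on the nonzero diagonals [k - 4, k - 6, ...], reaches
   diagonal [0] at index [(p + k.-1) %% Esize], and jumps back to [k - 2]. *)
Definition Ereturn p := Ejump ((p + k.-1) %% Esize).

Lemma reach_return p : p < Esize ->
  reach step (Ecol p, k - 2) (Ecol (Ereturn p), k - 2).
Proof.
move=> p_lt; apply: reach_trans (reach_walkN (N := k.-1) p_lt _ _) _.
- by lia.
- by move=> N' N'_lt; apply: iter_dec2_neq0.
by rewrite iter_dec2_last //; apply/reach_jump/ltn_pmod.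
Qed.

Let g_le_i0g : g <= i0 * g. Proof. by rewrite leq_pmull. Qed.
Let i0g_pred : i0.-1 * g + g = i0 * g. Proof. by rewrite addnC -mulSn prednK. Qed.

Lemma Ereturn_index_hi p : 2 * h <= p < Esize -> (p + k.-1) %% Esize = p - 2 * h.
Proof.
case/andP=> p_ge p_lt; rewrite (_ : p + k.-1 = 2 * Esize + (p - 2 * h)).
  by rewrite modnMDl modn_small //; lia.
by rewrite k_pred /Esize; lia.
Qed.

Lemma Ereturn_index_lo p : p < 2 * h -> (p + k.-1) %% Esize = p + Esize - 2 * h.
Proof.
move=> p_lt; rewrite (_ : p + k.-1 = Esize + (p + Esize - 2 * h)).
  by rewrite modnDl modn_small //; rewrite /Esize; lia.
by rewrite k_pred /Esize; lia.
Qed.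

Lemma Ereturn_succ p : 2 * h <= p -> p.+1 < Esize -> Ereturn p = p.+1.
Proof.
move=> p_ge p_lt; rewrite /Ereturn Ereturn_index_hi; last by lia.
by rewrite /Ejump (_ : p - 2 * h + g = p.+1) ?p_lt //; lia.
Qed.

Lemma Ereturn_last : Ereturn Esize.-1 = h.
Proof.
rewrite /Ereturn Ereturn_index_hi; last by rewrite /Esize; lia.
rewrite /Ejump ifF; last by rewrite /Esize; lia.
rewrite (_ : Esize.-1 - 2 * h = i0.-1 * g + h); last by rewrite /Esize; lia.
by rewrite modnMDl modn_small //; lia.
Qed.

Lemma Ereturn_low p : p < h -> Ereturn p = p + h + 1.
Proof.
move=> p_lt; rewrite /Ereturn Ereturn_index_lo; last by lia.
rewrite /Ejump ifF; last by rewrite /Esize; lia.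
rewrite (_ : p + Esize - 2 * h = i0.-1 * g + (p + h + 1)); last by rewrite /Esize; lia.
by rewrite modnMDl modn_small //; lia.
Qed.

Lemma Ereturn_mid p : h <= p < 2 * h -> Ereturn p = p - h.
Proof.
case/andP=> p_ge p_lt; rewrite /Ereturn Ereturn_index_lo //.
rewrite /Ejump ifF; last by rewrite /Esize; lia.
rewrite (_ : p + Esize - 2 * h = i0 * g + (p - h)); last by rewrite /Esize; lia.
by rewrite modnMDl modn_small //; lia.
Qed.

Lemma reach_top_mid q : h <= q <= 2 * h ->
  reach step (Ecol q, k - 2) (Ecol (2 * h), k - 2).
Proof.
move Hd : (2 * h - q) => d; elim: d q Hd => [|d IH] q q_gap q_in.
  by rewrite (_ : q = 2 * h); [exact: reach_refl | lia].
apply: reach_trans (reach_return _) _; first by rewrite /Esize; lia.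
rewrite Ereturn_mid; last by lia.
apply: reach_trans (reach_return _) _; first by rewrite /Esize; lia.
rewrite Ereturn_low; last by lia.
by rewrite (_ : q - h + h + 1 = q.+1); [apply: IH | ]; lia.
Qed.

Lemma reach_top p : p < Esize ->
  reach step (Ecol p, k - 2) (Ecol (2 * h), k - 2).
Proof.
move=> p_lt; case: (ltnP p h) => [p_lt_h|p_ge_h].
  by apply: reach_trans (reach_return p_lt) _; rewrite Ereturn_low //; apply: reach_top_mid; lia.
case: (leqP p (2 * h)) => [p_le|p_gt]; first by apply: reach_top_mid; lia.
move Hd : (Esize.-1 - p) => d; elim: d p Hd p_lt p_ge_h p_gt => [|d IH] p p_gap p_lt p_ge_h p_gt.
  have p_eq : p = Esize.-1 by lia.
  apply: reach_trans (reach_return p_lt) _.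
  by rewrite p_eq Ereturn_last; apply: reach_top_mid; lia.
apply: reach_trans (reach_return p_lt) _.
by rewrite Ereturn_succ; [apply: IH | | ]; lia.
Qed.

Lemma reach_Emem_walk j D : j < n -> 0 < D < k ->
  exists2 p, p < Esize & reach step (j, D) (Ecol p, dec2 k D).
Proof.
move=> j_lt /andP [D_gt0 D_lt]; have D_neq0 : D != 0 by rewrite -lt0n.
pose P r := (0 < r) && Emem ((j + r) %% n).
have : exists r, P r.
  by exists (n - j); rewrite /P subn_gt0 j_lt subnKC ?(ltnW j_lt) // modnn Emem_small.
case/ex_minnP => r /andP [r_gt0 Er] r_min; have [p p_lt Ecol_p] := EmemP Er.
exists p => //; exists r; rewrite iter_step_walk // ?Er ?Ecol_p // => r' r'_in.
apply/negP => Er'; have : r <= r' by apply: r_min; rewrite /P Er' andbT; lia.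
by lia.
Qed.

Lemma reach_Emem_jump j : j < n ->
  exists2 p, p < Esize & reach step (j, 0) (Ecol p, k - 2).
Proof.
move=> j_lt; pose P r := (0 < r) && Emem ((j + r * (n - k.-1)) %% n).
have : exists r, P r.
  have m_gt0 : 0 < m by lia.
  have [r r_gt0 m_dvd] := coprime_mod_solve (j %/ g) m_gt0 m_coprime.
  exists r; rewrite /P r_gt0 jump_len {1}(divn_eq j g) mulnA -addnA.
  rewrite (addnC (j %% g)) addnA -mulnDl modn_block ?ltn_pmod //.
  by rewrite (eqP m_dvd) mul0n add0n Emem_small ?ltn_pmod.
case/ex_minnP => r /andP [r_gt0 Er] r_min; have [p p_lt Ecol_p] := EmemP Er.
exists p => //; exists r; rewrite iter_step_jump // ?Er ?Ecol_p // => r' r'_in.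
apply/negP => Er'; have : r <= r' by apply: r_min; rewrite /P Er' andbT; lia.
by lia.
Qed.

Lemma reach_Emem0 p D : p < Esize -> D < k ->
  exists2 p', p' < Esize & reach step (Ecol p, D) (Ecol p', 0).
Proof.
move=> p_lt D_lt.
have : exists N, iter N (dec2 k) D == 0.
  by have [N N0] := iter_dec2_eq0 k_odd k_ge2 D_lt; exists N; rewrite N0.
case/ex_minnP => N /eqP N0 N_min; exists ((p + N) %% Esize); first exact: ltn_pmod.
rewrite -N0; apply: reach_walkN => // N' N'_lt; apply/negP => /N_min; lia.
Qed.

Lemma reach_Emem j D : j < n -> D < k ->
  exists p D', [/\ p < Esize, D' < k & reach step (j, D) (Ecol p, D')].
Proof.
move=> j_lt D_lt; case: (posnP D) => [->|D_gt0].
  by have [p p_lt to_p] := reach_Emem_jump j_lt; exists p, (k - 2); split => //; lia.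
have [|p p_lt to_p] := @reach_Emem_walk j D j_lt; first by rewrite D_gt0.
by exists p, (dec2 k D); split => //; rewrite /dec2 ltn_pmod; lia.
Qed.

Lemma reach_sink x : x.1 < n -> x.2 < k -> reach step x (2 * h, k - 2).
Proof.
case: x => j D /= j_lt D_lt; have [p [D' [p_lt D'_lt to_p]]] := reach_Emem j_lt D_lt.
have [p' p'_lt to_p'] := reach_Emem0 p_lt D'_lt.
have jump_lt : Ejump p' < Esize.
  by rewrite /Ejump; case: ifP => // _; apply: leq_trans g_le_Esize; exact: ltn_pmod.
apply: reach_trans to_p (reach_trans to_p' (reach_trans (reach_jump p'_lt) _)).
by rewrite -[X in reach _ _ (X, _)](@Ecol_small (2 * h)); [exact: reach_top | lia].
Qed.

Lemma block_solution (A : {set 'I_n * 'I_n}) :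
  cyc_diag k A -> exists R C : 'I_n -> int, is_solution A R C.
Proof.
move=> A_diag; exists (@R_fwd n), (@C_of n Emem).
apply: (is_solution_of_sink A_diag k_ge2 k_lt_n (x0 := (2 * h, k - 2))) => /=.
- by rewrite n_eq g_eq; nia.
- by lia.
- exact: reach_sink.
Qed.
End BlockSolution.

Lemma modn_gap_eq m l a b : 0 < a < b -> b <= m -> l < m ->
  b + l = a %[mod m] -> b = a + (m - l).
Proof.
move=> /andP [a_gt0 ab] b_le l_lt.
rewrite (_ : b + l = a + (b - a + l)); last by lia.
rewrite -[in RHS](addn0 a) => /eqP; rewrite eqn_modDl mod0n -/(m %| _) => m_dvd.
have m_le : m <= b - a + l by apply: dvdn_leq; lia.
have : m %| b - a + l - m by rewrite dvdn_sub.
by case: (posnP (b - a + l - m)) => [|pos /(dvdn_leq pos)]; lia.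
Qed.

Lemma chain_span m l i (js : nat -> nat) : l < m ->
  (forall s, 1 <= s <= i.+1 -> 1 <= js s <= m) ->
  (forall s, 1 <= s <= i -> js s < js s.+1 /\ js s.+1 + l = js s %[mod m]) ->
  js i.+1 = js 1 + i * (m - l).
Proof.
move=> l_lt js_in js_step; suff : forall s, s <= i -> js s.+1 = js 1 + s * (m - l).
  by apply.
elim=> [|s IH] s_le; first by rewrite mul0n addn0.
have [js_lt js_mod] : js s.+1 < js s.+2 /\ js s.+2 + l = js s.+1 %[mod m].
  by apply: js_step; lia.
have /andP [js1_gt0 _] : 1 <= js s.+1 <= m by apply: js_in; lia.
have /andP [_ js2_le] : 1 <= js s.+2 <= m by apply: js_in; lia.
rewrite (@modn_gap_eq m l (js s.+1) (js s.+2)) ?js1_gt0 ?js_lt //.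
by rewrite IH ?mulSn; lia.
Qed.

Lemma size_flatten_iota (F : nat -> nat) g (s : seq nat) :
  size (flatten [seq iota (F x) g | x <- s]) = size s * g.
Proof. by elim: s => //= a s IH; rewrite size_cat size_iota IH mulSn. Qed.

Lemma size_blocks_cut_lt (E : seq nat) i (js : nat -> nat) f g : 0 < g -> uniq E ->
  (forall s, 1 <= s <= i.+1 -> 1 <= js s) -> 1 <= f ->
  (forall x, x \in E =
     [&& [exists s : 'I_i.+2, (1 <= s) && (1 + (js s).-1 * g <= x <= js s * g)] &
         ~~ (js i.+1 * g - f + 1 <= x <= js i.+1 * g)]) ->
  size E < i.+1 * g.
Proof.
move=> g_gt0 E_uniq js_ge1 f_ge1 E_eq.
pose blocks := flatten [seq iota (1 + (js s).-1 * g) g | s <- iota 1 i.+1].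
pose v := js i.+1 * g.
have block_end s : 1 <= js s -> (js s).-1 * g + g = js s * g.
  by move=> js_pos; rewrite addnC -mulSn prednK.
have js_last : 1 <= js i.+1 by apply: js_ge1; lia.
have v_in : v \in blocks.
  apply/flatten_mapP; exists i.+1; first by rewrite mem_iota; lia.
  by have := block_end _ js_last; rewrite mem_iota /v; lia.
apply: (@leq_ltn_trans (size [seq x <- blocks | x != v])).
  apply: uniq_leq_size => // x; rewrite E_eq => /andP [/existsP [s /andP [s_ge1 x_in]] x_cut].
  rewrite mem_filter; apply/andP; split.
    apply: contra x_cut => /eqP ->; rewrite /v leqnn andbT.
    have : 0 < js i.+1 * g by rewrite muln_gt0 g_gt0 js_last.
    by lia.
  have s_in : 1 <= s <= i.+1 by rewrite s_ge1 -ltnS ltn_ord.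
  apply/flatten_mapP; exists (nat_of_ord s); first by rewrite mem_iota; lia.
  by have := block_end s (js_ge1 s s_in); rewrite mem_iota; lia.
have -> : i.+1 * g = size blocks by rewrite size_flatten_iota size_iota.
rewrite size_filter -(count_predC (fun x => x != v)) -{1}(addn0 (count _ _)) ltn_add2l -has_count.
by apply/hasP; exists v => //=; rewrite eqxx.
Qed.

Lemma coprime_div_gcdn a b : 0 < a -> coprime (a %/ gcdn a b) (b %/ gcdn a b).
Proof.
move=> a_gt0; have gcd_gt0 : 0 < gcdn a b by rewrite gcdn_gt0 a_gt0.
by rewrite /coprime -(eqn_pmul2r gcd_gt0) mul1n muln_gcdl !divnK ?dvdn_gcdl ?dvdn_gcdr.
Qed.

Lemma coprime_subr m l : l <= m -> coprime m (m - l) = coprime m l.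
Proof.
move=> l_le; rewrite !(coprime_sym m) /coprime.
have m_eq : m = m - l + l by rewrite subnK.
by rewrite {2 3}m_eq gcdnDl gcdnDr gcdnC.
Qed.

Lemma odd_gcdn_decomp n k : odd n -> odd k -> 3 <= k -> k < n ->
  let g := gcdn n k.-1 in let m := n %/ g in let l := k.-1 %/ g in
  [/\ n = g * m, k = (g * l).+1, odd g, l = 2 * l./2 & 0 < l < m].
Proof.
move=> n_odd k_odd k_ge3 k_lt_n g m l.
have g_gt0 : 0 < g by rewrite gcdn_gt0; apply/orP; left; lia.
have n_eq : n = g * m by rewrite /m mulnC divnK ?dvdn_gcdl.
have k_eq : k.-1 = g * l by rewrite /l mulnC divnK ?dvdn_gcdr.
have g_odd : odd g by move: n_odd; rewrite n_eq oddM => /andP [].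
have l_even : ~~ odd l.
  move: k_odd; rewrite -(prednK (ltnW (ltnW k_ge3))) /= k_eq oddM g_odd.
  by case: (odd l).
split=> //.
- by rewrite -k_eq prednK //; lia.
- by rewrite -[LHS]odd_double_half (negbTE l_even) mul2n.
- have : 0 < g * l by rewrite -k_eq; lia.
  rewrite muln_gt0 => /andP [_ ->] /=.
  by rewrite -(ltn_pmul2l g_gt0) -n_eq -k_eq; lia.
Qed.

Unset Implicit Arguments.

Theorem proposition5p4 (n k : nat) (A : {set 'I_n * 'I_n}) :
  odd n -> odd k -> 3 <= k -> k < n ->
  cyc_diag k A ->
  let g := gcdn n k.-1 in
  let m := n %/ g in
  let l := k.-1 %/ g in
  (exists E : seq nat,
     [/\ uniq E, {subset E <= iota 1 n},
         size E = k.-1 %/ 2 + g.-1 %/ 2 &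
         exists (i : nat) (js : nat -> nat) (f : nat),
           [/\ 1 <= i <= l - 1,
               forall s, 1 <= s <= i.+1 -> 1 <= js s <= m,
               forall s, 1 <= s <= i ->
                 js s < js s.+1 /\ js s.+1 + l = js s %[mod m],
               1 <= f <= g - 1 &
               forall x, x \in E =
                 [&& [exists s : 'I_i.+2, (1 <= s) &&
                        (1 + (js s).-1 * g <= x <= js s * g)] &
                     ~~ (js i.+1 * g - f + 1 <= x <= js i.+1 * g)]]]) ->
  exists R C : 'I_n -> int, is_solution A R C.
Proof.
move=> n_odd k_odd k_ge3 k_lt_n A_diag g m l.
have [n_eq k_eq g_odd l_eq /andP [l_gt0 l_lt_m]] :
    [/\ n = g * m, k = (g * l).+1, odd g, l = 2 * l./2 & 0 < l < m] :=
  odd_gcdn_decomp n_odd k_odd k_ge3 k_lt_n.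
move=> [E [E_uniq _ E_size [i [js [f [_ js_in js_step f_in E_eq]]]]]].
have g_gt1 : 1 < g by lia.
have E_lt : size E < i.+1 * g.
  apply: (size_blocks_cut_lt _ E_uniq _ _ E_eq); [lia | | lia].
  by move=> s s_in; have /andP [] := js_in s s_in.
have l2_le_i : l./2 <= i.
  rewrite -ltnS -(ltn_pmul2r (ltnW g_gt1)); apply: leq_ltn_trans E_lt.
  by rewrite E_size k_eq /= [in g * l]l_eq mulnCA mulKn // mulnC leq_addr.
have fit : i * (m - l) < m.
  have /andP [js1_ge1 _] : 1 <= js 1 <= m by apply: js_in; lia.
  have /andP [_ js_last] : 1 <= js i.+1 <= m by apply: js_in; lia.
  by move: js_last; rewrite (chain_span l_lt_m js_in js_step); lia.
apply: (@block_solution n k g m l./2 g./2); rewrite -?l_eq //.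
- by rewrite -[LHS]odd_double_half g_odd add1n.
- by rewrite half_gt0.
- by rewrite half_gt0; lia.
- by apply: leq_ltn_trans fit; rewrite leq_mul2r l2_le_i orbT.
- by rewrite coprime_subr ?coprime_div_gcdn //; lia.
Qed.
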